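(* Let $k\ge2$ and $n\ge1$. For every permutation $P$ of $\{1,\dots,k^n\}$, there is a strategy for labeled chip-firing starting with $k^{2n}$ chips labeled $1,\dots,k^{2n}$ at the root of the infinite rooted directed $k$-ary tree whose stable configuration (a permutation of $\{1,\dots,k^{2n}\}$) contains a subsequence of length $k^n$ that is order-isomorphic to $P$.
   Context: Labeled chip-firing on the infinite rooted directed $k$-ary tree (each vertex has $k$ children ordered left to right, root on layer $1$): a vertex with at least $k$ chips may fire by choosing any $k$ of its chips and sending the $i$-th smallest label among them to its $i$-th leftmost child. A strategy is a sequence of legal firings continued until no vertex has $\ge k$ chips. Starting with $k^p$ chips at the root, every stable configuration has exactly one chip on each vertex of layer $p+1$ and none elsewhere, and is identified with the permutation of labels read left to right on layer $p+1$. A sequence $w_1,\dots,w_n$ of distinct numbers is order-isomorphic to a permutation $\sigma\in S_n$ if, for each $j$, $w_j$ is the $\sigma_j$-th smallest of $w_1,\dots,w_n$. *)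

From mathcomp Require Import all_boot all_fingroup.
Set Implicit Arguments. Unset Strict Implicit. Unset Printing Implicit Defensive.

(* Vertices of the infinite rooted k-ary tree: sequences of child indices
   (each < k); the root is [::] (layer 1), a vertex v is on layer size v + 1,
   and the i-th leftmost child (0-based i) of v is rcons v i.  A configuration [pos : nat -> seq nat] gives the
   vertex of each chip (only labels 1..N are meaningful). *)

Definition chips (N : nat) := iota 1 N.

Definition init_conf : nat -> seq nat := fun _ => [::].

Definition legal_fire (k N : nat) (pos : nat -> seq nat) (v : seq nat)
    (s : seq nat) : bool :=
  [&& size s == k, sorted ltn s & all (fun l => (l \in chips N) && (pos l == v)) s].

(* Result of the firing: the i-th smallest chosen label goes to the i-th
   leftmost child of v. *)
Definition fire (pos : nat -> seq nat) (v : seq nat) (s : seq nat) :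
    nat -> seq nat :=
  fun l => if l \in s then rcons v (index l s) else pos l.

Inductive reachable (k N : nat) : (nat -> seq nat) -> Prop :=
| reach_init : reachable k N init_conf
| reach_fire pos v s : reachable k N pos -> legal_fire k N pos v s ->
    reachable k N (fire pos v s).

Definition stable (k N : nat) (pos : nat -> seq nat) : Prop :=
  forall v : seq nat, count (fun l => pos l == v) (chips N) < k.

(* Left-to-right order of vertices (lexicographic on child-index sequences;
   on a fixed layer this is exactly the left-to-right order). *)
Fixpoint lex_le (a b : seq nat) : bool :=
  match a, b with
  | [::], _ => true
  | _ :: _, [::] => false
  | x :: a', y :: b' => (x < y) || ((x == y) && lex_le a' b')
  end.

Definition read_word (N : nat) (pos : nat -> seq nat) : seq nat :=
  sort (fun l1 l2 => lex_le (pos l1) (pos l2)) (chips N).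

(* t (distinct numbers) is order-isomorphic to sigma in S_m: for each j,
   t_j is the sigma_j-th smallest entry (0-based: exactly sigma j entries of t
   are smaller than t_j). *)
Definition order_iso (m : nat) (t : seq nat) (sigma : 'S_m) : Prop :=
  [/\ size t = m, uniq t &
      forall j : 'I_m, count (fun x => x < nth 0 t j) t = sigma j].

From mathcomp Require Import all_boot all_fingroup zify.
From Stdlib Require Import FunctionalExtensionality.
Set Implicit Arguments. Unset Strict Implicit. Unset Printing Implicit Defensive.

(* Write the label of chip [x.+1] in base [k] with [2 n] digits and run a radix
   sort: in round [d] every vertex of layer [d + 1] holds the chips agreeing on
   the digits read so far, and the [k] chips there that differ only in the
   digit read in round [d] are fired together, so that digit becomes the child
   index.  Any order of reading the digits is a legal strategy, and since all
   [2 n] digits are read the final vertices are distinct, so the configuration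
   is stable.  Reading the low half of the label first (most significant digit
   first) makes the left-to-right order agree with the order of the labels
   modulo [k ^ n], while the size of a label is decided by its high half; the
   chips with labels [j + k ^ n * P j + 1] therefore appear in the order of [j]
   and compare like [P j]. *)

Definition digit (k q x : nat) := (x %/ k ^ q) %% k.

(* [ins_digit k p a i] inserts [i] as the digit of index [p] into [a], shifting
   the higher digits up; [del_digit k p x] removes the digit of index [p]. *)
Definition ins_digit (k p a i : nat) := a %% k ^ p + k ^ p * (i + k * (a %/ k ^ p)).
Definition del_digit (k p x : nat) := x %% k ^ p + k ^ p * (x %/ k ^ p.+1).

Section Digits.

Variable k : nat.
Hypothesis k_gt0 : 0 < k.

Let kX_gt0 p : 0 < k ^ p. Proof. by rewrite expn_gt0 k_gt0. Qed.

Lemma digit0 x : digit k 0 x = x %% k.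
Proof. by rewrite /digit expn0 divn1. Qed.

Lemma digitS q x : digit k q.+1 x = digit k q (x %/ k).
Proof. by rewrite /digit expnS divnMA. Qed.

Lemma digit_top n x : x < k ^ n.+1 -> digit k n x = x %/ k ^ n.
Proof. by move=> xn; rewrite /digit modn_small // ltn_divLR // -expnS. Qed.

Lemma digit_mod q P x : q < P -> digit k q (x %% k ^ P) = digit k q x.
Proof.
move=> qP; rewrite /digit divn_modl ?dvdn_exp2l ?(ltnW qP) //.
rewrite -expnB ?(ltnW qP) //; apply: modn_dvdm.
by rewrite -{1}(expn1 k) dvdn_exp2l // subn_gt0.
Qed.

Lemma eq_from_digits D x y : x < k ^ D -> y < k ^ D ->
  (forall q, q < D -> digit k q x = digit k q y) -> x = y.
Proof.
elim: D x y => [|D IH] x y.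
  by rewrite expn0 !ltnS !leqn0 => /eqP -> /eqP ->.
move=> xD yD eq_xy; have e0 := eq_xy 0 isT; rewrite !digit0 in e0.
have e1 : x %/ k = y %/ k.
  apply: IH; rewrite ?ltn_divLR // -?expnSr //.
  by move=> q qD; rewrite -!digitS; apply: eq_xy.
by rewrite (divn_eq x k) (divn_eq y k) e0 e1.
Qed.

Lemma ins_digit_mod p a i : ins_digit k p a i %% k ^ p = a %% k ^ p.
Proof. by rewrite /ins_digit addnC mulnC modnMDl modn_mod. Qed.

Lemma ins_digit_div p a i : ins_digit k p a i %/ k ^ p = i + k * (a %/ k ^ p).
Proof.
by rewrite /ins_digit addnC mulnC divnMDl // (divn_small (ltn_pmod _ (kX_gt0 p))) addn0.
Qed.

Lemma digit_ins_digit_other p q a i : i < k -> q != p ->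
  digit k q (ins_digit k p a i) = digit k q (ins_digit k p a 0).
Proof.
move=> ik; case: (ltngtP q p) => // [qp|pq] _.
  by rewrite -(digit_mod _ qp) -[RHS](digit_mod _ qp) !ins_digit_mod.
rewrite /digit -(subnKC pq) expnD !divnMA expnSr !divnMA !ins_digit_div.
by rewrite !(mulnC k) ![_ + _ * k]addnC !divnMDl // (divn_small ik) div0n.
Qed.

Lemma digit_ins_digit p a i : i < k -> digit k p (ins_digit k p a i) = i.
Proof.
by move=> ik; rewrite /digit ins_digit_div (mulnC k) addnC modnMDl modn_small.
Qed.

Lemma del_ins_digit p a i : i < k -> del_digit k p (ins_digit k p a i) = a.
Proof.
move=> ik; rewrite /del_digit ins_digit_mod expnSr divnMA ins_digit_div.
by rewrite (mulnC k) [i + _]addnC divnMDl // (divn_small ik) addn0 addnC mulnC -divn_eq.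
Qed.

Lemma ins_digit_inj p a a' i i' : i < k -> i' < k ->
  ins_digit k p a i = ins_digit k p a' i' -> a = a' /\ i = i'.
Proof.
move=> ik ik' E; split.
  by rewrite -(del_ins_digit p a ik) E del_ins_digit.
by rewrite -(digit_ins_digit p a ik) E digit_ins_digit.
Qed.

Lemma ins_del_digit p x : ins_digit k p (del_digit k p x) (digit k p x) = x.
Proof.
have dm : del_digit k p x %% k ^ p = x %% k ^ p.
  by rewrite /del_digit addnC mulnC modnMDl modn_mod.
have dd : del_digit k p x %/ k ^ p = x %/ k ^ p.+1.
  by rewrite /del_digit addnC mulnC divnMDl // (divn_small (ltn_pmod _ (kX_gt0 p))) addn0.
rewrite /ins_digit dm dd /digit expnSr divnMA.
by rewrite [_ %% k + _]addnC (mulnC k) -divn_eq mulnC addnC -divn_eq.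
Qed.

Lemma ltn_ins_digit p a i i' :
  (ins_digit k p a i < ins_digit k p a i') = (i < i').
Proof. by rewrite /ins_digit ltn_add2l ltn_mul2l kX_gt0 ltn_add2r. Qed.

Lemma ins_digit_lt p m a i : p <= m -> a < k ^ m -> i < k ->
  ins_digit k p a i < k ^ m.+1.
Proof.
move=> pm am ik; rewrite -(subnKC pm) -addnS expnD mulnC -ltn_divLR //.
rewrite ins_digit_div expnS; apply: leq_trans (_ : k * (a %/ k ^ p).+1 <= _).
  by rewrite mulnS ltn_add2r.
by rewrite leq_mul2l ltn_divLR // -expnD subnK // am orbT.
Qed.

Lemma del_digit_lt p m x : p <= m -> x < k ^ m.+1 -> del_digit k p x < k ^ m.
Proof.
move=> pm xm; rewrite -(subnKC pm) expnD mulnC -ltn_divLR //.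
rewrite /del_digit addnC mulnC divnMDl // (divn_small (ltn_pmod _ (kX_gt0 p))) addn0.
by rewrite ltn_divLR // -expnD addnS subnK.
Qed.

End Digits.

Lemma mem_chipsS N x : (x.+1 \in chips N) = (x < N).
Proof. by rewrite /chips mem_iota add1n ltnS. Qed.

Lemma mem_iota0 n i : (i \in iota 0 n) = (i < n).
Proof. by rewrite mem_iota. Qed.

Lemma index_iota0 n i : i < n -> index i (iota 0 n) = i.
Proof.
by move=> i_lt; rewrite -{1}(add0n i) -(nth_iota 0 0 i_lt) index_uniq ?size_iota ?iota_uniq.
Qed.

Lemma chips0 N : 0 \notin chips N.
Proof. by rewrite /chips mem_iota. Qed.

Definition fire_list (pos : nat -> seq nat) (L : seq (seq nat * seq nat)) :=
  foldl (fun pos vs => fire pos vs.1 vs.2) pos L.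

Lemma fire_notin pos v s l : l \notin s -> fire pos v s l = pos l.
Proof. by rewrite /fire => /negbTE ->. Qed.

Lemma fire_list_notin pos L l :
  l \notin flatten (map snd L) -> fire_list pos L l = pos l.
Proof.
elim: L pos => //= vs L IH pos; rewrite mem_cat negb_or => /andP[l_vs l_L].
by rewrite IH // fire_notin.
Qed.

Lemma fire_list_mem pos L vs l : uniq (flatten (map snd L)) -> vs \in L ->
  l \in vs.2 -> fire_list pos L l = rcons vs.1 (index l vs.2).
Proof.
elim: L pos => //= vs' L IH pos; rewrite cat_uniq => /and3P[_ vs'_L uL].
rewrite inE => /orP[/eqP-> l_vs|vs_L l_vs]; last by rewrite IH.
rewrite fire_list_notin; first by rewrite /fire l_vs.
by apply: contra vs'_L => l_L; apply/hasP; exists l.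
Qed.

(* Firings in a list with pairwise disjoint chip sets do not interfere, so
   they may all be checked for legality in the initial configuration. *)
Lemma reachable_fire_list k N pos L : reachable k N pos ->
  uniq (flatten (map snd L)) ->
  all (fun vs => legal_fire k N pos vs.1 vs.2) L ->
  reachable k N (fire_list pos L).
Proof.
elim: L pos => //= vs L IH pos R; rewrite cat_uniq => /and3P[_ vs_L uL].
move=> /andP[legal_vs legal_L]; apply: IH => //; first exact: reach_fire.
apply/allP => vs' vs'_L; have := allP legal_L vs' vs'_L.
rewrite /legal_fire => /and3P[-> -> /allP at_v] /=.
apply/allP => l l_vs'; rewrite fire_notin ?at_v //.
apply: contra vs_L => l_vs; apply/hasP; exists l => //.
by apply/flatten_mapP; exists vs'.
Qed.

Lemma stable_of_inj k N pos : 1 < k -> {in chips N &, injective pos} ->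
  stable k N pos.
Proof.
move=> k_gt1 pos_inj v; apply: leq_ltn_trans k_gt1.
rewrite -[count _ _]/(count (preim pos (pred1 v)) (chips N)) -count_map.
by rewrite count_uniq_mem ?leq_b1 // map_inj_in_uniq ?iota_uniq.
Qed.

(* [p d] is the digit read in round [d]: after [d] rounds chip [x.+1] sits at
   the vertex spelled by its digits of indices [p 0], ..., [p d.-1]. *)
Definition radix_conf (k m : nat) (p : nat -> nat) (d : nat) : nat -> seq nat :=
  fun l => if l \in chips (k ^ m.+1) then [seq digit k (p j) l.-1 | j <- iota 0 d]
           else [::].

Definition radix_round (k m : nat) (p : nat -> nat) (d : nat) :=
  [seq (radix_conf k m p d (ins_digit k (p d) a 0).+1,
        [seq (ins_digit k (p d) a i).+1 | i <- iota 0 k]) | a <- iota 0 (k ^ m)].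

Definition digit_order (D : nat) (p : nat -> nat) :=
  {in gtn D, forall j, p j < D} /\ {in gtn D &, injective p}.

Section RadixStrategy.

Variables (k m : nat) (p : nat -> nat).
Hypotheses (k_gt0 : 0 < k) (p_order : digit_order m.+1 p).

Let p_le d : d <= m -> p d <= m.
Proof. by move=> dm; rewrite -ltnS (proj1 p_order). Qed.

Let p_inj j d : j <= m -> d <= m -> p j = p d -> j = d.
Proof. by move=> jm dm; apply: (proj2 p_order). Qed.

Lemma radix_conf_ins_digit d a i : d <= m -> a < k ^ m -> i < k ->
  radix_conf k m p d (ins_digit k (p d) a i).+1 =
  radix_conf k m p d (ins_digit k (p d) a 0).+1.
Proof.
move=> dm am ik; rewrite /radix_conf !mem_chipsS !ins_digit_lt ?p_le //=.
apply/eq_in_map => j; rewrite mem_iota0 => jd.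
apply: digit_ins_digit_other => //; have j_ne_d : j != d by rewrite ltn_eqF.
by apply: contra_neq j_ne_d; apply: p_inj; rewrite // ltnW // (leq_trans jd).
Qed.

Lemma radix_round_uniq d : uniq (flatten (map snd (radix_round k m p d))).
Proof.
rewrite /radix_round -map_comp; apply: allpairs_uniq; rewrite ?iota_uniq //.
move=> [a i] [a' i'] /allpairsP[[a1 i1] /= [_ i1k [-> ->]]].
move=> /allpairsP[[a2 i2] /= [_ i2k [-> ->]]] /= [E].
rewrite !mem_iota0 in i1k i2k.
by have [-> ->] := ins_digit_inj k_gt0 i1k i2k E.
Qed.

Lemma radix_round_legal d : d <= m ->
  all (fun vs => legal_fire k (k ^ m.+1) (radix_conf k m p d) vs.1 vs.2)
      (radix_round k m p d).
Proof.
move=> dm; apply/allP => vs /mapP[a]; rewrite mem_iota0 => am -> /=.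
rewrite /legal_fire size_map size_iota eqxx sorted_map /=.
rewrite (sub_sorted _ (iota_ltn_sorted 0 k)); last first.
  by move=> i i'; rewrite /= ltnS (ltn_ins_digit k_gt0).
apply/allP => l /mapP[i]; rewrite mem_iota0 => ik ->.
by rewrite mem_chipsS ins_digit_lt ?p_le //= radix_conf_ins_digit.
Qed.

Lemma radix_round_fire d : d <= m ->
  fire_list (radix_conf k m p d) (radix_round k m p d) =1 radix_conf k m p d.+1.
Proof.
move=> dm l; case l_chips: (l \in chips (k ^ m.+1)); last first.
  rewrite fire_list_notin; first by rewrite /radix_conf l_chips.
  apply: contraFN l_chips => /flatten_mapP[vs /mapP[a]]; rewrite mem_iota0.
  move=> am -> /mapP[i]; rewrite mem_iota0 => ik ->.
  by rewrite mem_chipsS ins_digit_lt ?p_le.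
case: l l_chips => [|x]; first by rewrite (negbTE (chips0 _)).
rewrite mem_chipsS => xm.
set a := del_digit k (p d) x; set i := digit k (p d) x.
have am : a < k ^ m by apply: del_digit_lt; rewrite ?p_le.
have ik : i < k by apply: ltn_pmod.
have Ex : ins_digit k (p d) a i = x by apply: ins_del_digit.
have group_inj : injective (fun i => (ins_digit k (p d) a i).+1).
  by move=> i1 i2 [] /(congr1 (divn^~ (k ^ p d))); rewrite !(ins_digit_div k_gt0) => /addIn.
rewrite (@fire_list_mem _ _ (radix_conf k m p d (ins_digit k (p d) a 0).+1,
           [seq (ins_digit k (p d) a i).+1 | i <- iota 0 k])).
- rewrite /= -{1}Ex index_map // index_iota0 // -(radix_conf_ins_digit dm am ik) Ex.
  by rewrite /radix_conf mem_chipsS xm -[d.+1]addn1 iotaD map_cat cats1.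
- exact: radix_round_uniq.
- by apply/mapP; exists a; rewrite ?mem_iota0.
- by rewrite /= -Ex map_f ?mem_iota0.
Qed.

Lemma radix_conf_reachable d : d <= m.+1 ->
  reachable k (k ^ m.+1) (radix_conf k m p d).
Proof.
elim: d => [_|d IH dm].
  have -> : radix_conf k m p 0 = init_conf.
    by apply: functional_extensionality => l; rewrite /radix_conf; case: ifP.
  exact: reach_init.
have -> : radix_conf k m p d.+1 = fire_list (radix_conf k m p d) (radix_round k m p d).
  by apply: functional_extensionality => l; rewrite radix_round_fire.
apply: reachable_fire_list; rewrite ?radix_round_uniq ?radix_round_legal //.
exact/IH/ltnW.
Qed.

Lemma digit_order_onto q : q <= m -> exists2 j, j <= m & p j = q.
Proof.
move=> qm; have [_ /(_ q)] : (size [seq p j | j <- iota 0 m.+1] = size (iota 0 m.+1))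
                          * ([seq p j | j <- iota 0 m.+1] =i iota 0 m.+1).
  apply: uniq_min_size; rewrite ?size_map //.
    by rewrite map_inj_in_uniq ?iota_uniq // => j d; rewrite !mem_iota0 !ltnS; apply: p_inj.
  by move=> q1 /mapP[j]; rewrite !mem_iota0 => jm ->; apply: (proj1 p_order).
by rewrite mem_iota0 ltnS qm => /mapP[j]; rewrite mem_iota0 ltnS => jm ->; exists j.
Qed.

Lemma radix_conf_inj : {in chips (k ^ m.+1) &, injective (radix_conf k m p m.+1)}.
Proof.
move=> [|x] [|y]; rewrite ?(negbTE (chips0 _)) // !mem_chipsS => xm ym.
rewrite /radix_conf !mem_chipsS xm ym => E; congr _.+1.
apply: (eq_from_digits k_gt0 xm ym) => q; rewrite ltnS => /digit_order_onto[j jm <-].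
have := congr1 (nth 0 ^~ j) E.
by rewrite !(nth_map 0) ?size_iota // nth_iota.
Qed.

End RadixStrategy.

Lemma lex_le_total : total lex_le.
Proof. by elim=> [|x a IH] [|y b] //=; case: (ltngtP x y) => //= ->. Qed.

Lemma lex_le_trans : transitive lex_le.
Proof.
move=> b a; elim: a b => [|x a IH] [|y b] [|z c] //=.
move=> /orP[xy|/andP[/eqP exy hab]] /orP[yz|/andP[/eqP eyz hbc]].
- by rewrite (ltn_trans xy yz).
- by rewrite -eyz xy.
- by rewrite exy yz.
- by rewrite exy eyz eqxx (IH _ _ hab hbc) orbT.
Qed.

Lemma lex_le_anti : antisymmetric lex_le.
Proof.
elim=> [|x a IH] [|y b] //=.
move=> /andP[/orP[xy|/andP[/eqP exy hab]] /orP[yx|/andP[/eqP eyx hba]]].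
- by move: (ltn_trans xy yx); rewrite ltnn.
- by move: xy; rewrite eyx ltnn.
- by move: yx; rewrite exy ltnn.
- by rewrite exy (IH b) // hab hba.
Qed.

Lemma subseq_read_word N pos t : {in chips N &, injective pos} ->
  uniq t -> {subset t <= chips N} ->
  sorted (fun l1 l2 => lex_le (pos l1) (pos l2)) t -> subseq t (read_word N pos).
Proof.
move=> pos_inj t_uniq t_chips t_sorted.
have chips_perm : perm_eq (chips N) (t ++ [seq l <- chips N | l \notin t]).
  rewrite -(perm_filterC (mem t) (chips N)) perm_cat2r.
  apply: uniq_perm; rewrite ?filter_uniq ?iota_uniq // => l.
  by rewrite mem_filter; apply/andb_idr => /t_chips.
set r := fun l1 l2 => lex_le (pos l1) (pos l2).
have r_total : total r by move=> l1 l2; exact: lex_le_total.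
have r_trans : transitive r by move=> l2 l1 l3; exact: lex_le_trans.
rewrite /read_word -/r.
have -> : sort r (chips N) = sort r (t ++ [seq l <- chips N | l \notin t]).
  apply/perm_sort_inP => //; first exact: in3W.
  by move=> l1 l2 l1_chips l2_chips /lex_le_anti; apply: pos_inj.
by apply: sorted_subseq_sort => //; exact: prefix_subseq.
Qed.

Definition numeral (k n x : nat) := [seq digit k (n.-1 - j) x | j <- iota 0 n].

Section Numerals.

Variable k : nat.
Hypothesis k_gt0 : 0 < k.

Lemma numeral_mod n x : numeral k n (x %% k ^ n) = numeral k n x.
Proof. by apply/eq_in_map => j; rewrite mem_iota0 => jn; apply: digit_mod; lia. Qed.

Lemma numeralS n x : numeral k n.+1 x = digit k n x :: numeral k n x.
Proof.
rewrite /numeral /= subn0; congr cons.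
rewrite -[iota 1 n]/(iota (1 + 0) n) iotaDl -map_comp; apply/eq_map => j /=.
by congr digit; lia.
Qed.

Lemma lex_le_numeral_cat n x y b b' : x < y -> y < k ^ n ->
  lex_le (numeral k n x ++ b) (numeral k n y ++ b').
Proof.
elim: n x y => [|n IH] x y xy yn.
  by move: yn; rewrite expn0 ltnS leqn0 => /eqP y0; rewrite y0 in xy.
have xn := ltn_trans xy yn.
rewrite !numeralS /= !digit_top // -[numeral k n x]numeral_mod -[numeral k n y]numeral_mod.
have : x %/ k ^ n <= y %/ k ^ n by apply/leq_div2r/ltnW.
case: ltngtP => //= xy_hi _; apply: IH; rewrite ?ltn_pmod ?expn_gt0 ?k_gt0 //.
by move: xy; rewrite {1}(divn_eq x (k ^ n)) {1}(divn_eq y (k ^ n)) xy_hi ltn_add2l.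
Qed.

End Numerals.

Lemma count_iota0_ltn c M : count (fun y => y < c) (iota 0 M) = minn c M.
Proof.
elim: M => [|M IH]; first by rewrite minn0.
by rewrite -addn1 iotaD count_cat IH /= addn0 add0n; case: ltnP => /= h; lia.
Qed.

Lemma count_perm_ltn K (P : 'S_K) (j : 'I_K) :
  count (fun i : 'I_K => P i < P j) (enum 'I_K) = P j.
Proof.
have P_enum : perm_eq [seq P i | i <- enum 'I_K] (enum 'I_K).
  apply: uniq_perm; rewrite ?(map_inj_uniq (@perm_inj _ P)) ?enum_uniq //.
  by move=> y; rewrite mem_enum; apply/mapP; exists (P^-1 y)%g; rewrite ?mem_enum ?permKV.
rewrite -[LHS](count_map P (fun y : 'I_K => y < P j)) (seq.permP P_enum).
rewrite -[LHS](count_map val (fun y => y < P j)) val_enum_ord count_iota0_ltn.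
exact/minn_idPl/ltnW.
Qed.

Lemma order_iso_map K (P : 'S_K) (f : 'I_K -> nat) :
  (forall i j, (f i < f j) = (P i < P j)) -> order_iso [seq f j | j <- enum 'I_K] P.
Proof.
move=> f_mono; have f_inj : injective f.
  move=> i j fij; have : ~~ (f i < f j) && ~~ (f j < f i) by rewrite fij ltnn.
  by rewrite !f_mono -!leqNgt -eqn_leq => /eqP/val_inj/perm_inj.
split; first by rewrite size_map size_enum_ord.
  by rewrite map_inj_uniq ?enum_uniq.
move=> j; rewrite (nth_map j) ?size_enum_ord // nth_ord_enum count_map.
by rewrite -(count_perm_ltn P j); apply: eq_count => i; rewrite /= f_mono.
Qed.

Lemma ltn_mixed_radix K a b c d : a < K -> c < K -> b != d ->
  (a + K * b < c + K * d) = (b < d).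
Proof.
move=> aK cK; case: (ltngtP b d) => // bd _.
  have : K * b.+1 <= K * d by rewrite leq_mul2l bd orbT.
  rewrite mulnS; lia.
have : K * d.+1 <= K * b by rewrite leq_mul2l bd orbT.
rewrite mulnS; lia.
Qed.

(* The digit of index [d < n] is read in round [n.-1 - d], so the first [n]
   rounds spell the low half of a label most significant digit first. *)
Definition low_half_first (n d : nat) := if d < n then n.-1 - d else d.

Lemma low_half_firstK n : involutive (low_half_first n).
Proof.
by move=> d; rewrite /low_half_first; case: (ltnP d n) => h; case: ifP; lia.
Qed.

Lemma low_half_first_order n : digit_order (2 * n) (low_half_first n).
Proof.
split; last exact: in2W (inv_inj (@low_half_firstK n)).
by move=> d; rewrite inE /low_half_first; case: ifP; lia.
Qed.

Lemma radix_low_half_first k n m x : m.+1 = 2 * n -> x < k ^ m.+1 ->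
  radix_conf k m (low_half_first n) m.+1 x.+1 =
  numeral k n x ++ [seq digit k j x | j <- iota n n].
Proof.
move=> Em xm; rewrite /radix_conf mem_chipsS xm Em.
rewrite mul2n -addnn iotaD map_cat add0n; congr (_ ++ _); apply/eq_in_map => j.
  by rewrite mem_iota0 /low_half_first => ->.
by rewrite mem_iota /low_half_first => /andP[nj _]; rewrite ltnNge nj.
Qed.

Lemma lex_le_radix_low_half_first k n m x y : 0 < k -> m.+1 = 2 * n ->
  x < k ^ m.+1 -> y < k ^ m.+1 -> x %% k ^ n < y %% k ^ n ->
  lex_le (radix_conf k m (low_half_first n) m.+1 x.+1)
         (radix_conf k m (low_half_first n) m.+1 y.+1).
Proof.
move=> k_gt0 Em xm ym xy; rewrite !radix_low_half_first //.
rewrite -(numeral_mod k_gt0 n x) -(numeral_mod k_gt0 n y).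
by apply: lex_le_numeral_cat; rewrite // ltn_pmod ?expn_gt0 ?k_gt0.
Qed.

Section PatternLabels.

Variables (K : nat) (P : 'S_K).

(* Position [j] of the pattern is played by the chip with label
   [pattern_label j].+1: its low half is [j] and its high half is [P j]. *)
Definition pattern_label (j : 'I_K) := j + K * P j.

Lemma ltn_pattern_label i j : (pattern_label i < pattern_label j) = (P i < P j).
Proof.
case: (eqVneq i j) => [-> | ij]; first by rewrite !ltnn.
by rewrite ltn_mixed_radix // (inj_eq val_inj) (inj_eq (@perm_inj _ P)).
Qed.

Lemma pattern_label_lt j : pattern_label j < K * K.
Proof.
apply: (leq_trans (_ : _ < K * (P j).+1)); first by rewrite mulnS ltn_add2r.
by rewrite leq_mul2l ltn_ord orbT.
Qed.

Lemma pattern_label_mod j : pattern_label j %% K = j.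
Proof. by rewrite /pattern_label addnC mulnC modnMDl modn_small. Qed.

Lemma order_iso_pattern_label :
  order_iso [seq (pattern_label j).+1 | j <- enum 'I_K] P.
Proof. by apply: order_iso_map => i j; rewrite ltnS ltn_pattern_label. Qed.

End PatternLabels.

Theorem theorem4p2 (k n : nat) (hk : 2 <= k) (hn : 1 <= n) (P : 'S_(k ^ n)) :
  exists pos : nat -> seq nat,
    [/\ reachable k (k ^ (2 * n)) pos,
        stable k (k ^ (2 * n)) pos &
        exists t : seq nat,
          subseq t (read_word (k ^ (2 * n)) pos) /\ order_iso t P].
Proof.
have k_gt0 : 0 < k := ltnW hk.
have [m Em] : exists m, m.+1 = 2 * n by exists (2 * n).-1; rewrite prednK // muln_gt0.
have order : digit_order m.+1 (low_half_first n).
  by rewrite Em; exact: low_half_first_order.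
have pos_inj := radix_conf_inj k_gt0 order.
exists (radix_conf k m (low_half_first n) m.+1); rewrite -Em; split.
- exact: radix_conf_reachable.
- exact: stable_of_inj.
have label_lt j : pattern_label P j < k ^ m.+1.
  by rewrite Em mul2n -addnn expnD pattern_label_lt.
have [_ t_uniq _] := order_iso_pattern_label P.
exists [seq (pattern_label P j).+1 | j <- enum 'I_(k ^ n)].
split; last exact: order_iso_pattern_label.
apply: subseq_read_word pos_inj t_uniq _ _.
  by move=> _ /mapP[j _ ->]; rewrite mem_chipsS.
rewrite sorted_map; have := iota_ltn_sorted 0 (k ^ n).
rewrite -val_enum_ord sorted_map; apply: sub_sorted => i j /= ij.
by apply: lex_le_radix_low_half_first; rewrite ?pattern_label_mod.
Qed.
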